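(* Let $\Gamma$ be a finite, connected, labelled simplicial graph on at least three vertices, and let $H,V$ be two standard big chunk parabolic subgroups of $A_\Gamma$. If $H\le kVk^{-1}$ for some $k\in A_\Gamma$, then $H=V$ and $k\in H$.
   Context: Labels $m_{ab}\in\mathbb{Z}_{\ge2}$ on edges; $A_\Gamma=\langle V(\Gamma)\mid \mathrm{prod}(a,b,m_{ab})=\mathrm{prod}(b,a,m_{ab})\ \forall\{a,b\}\in E(\Gamma)\rangle$, with $\mathrm{prod}(u,v,n)$ the prefix of length $n$ of $uvuv\cdots$. For a full subgraph $\Lambda$, $A_\Lambda=\langle V(\Lambda)\rangle\le A_\Gamma$ (standard parabolic subgroup). A big chunk of $\Gamma$ is a connected induced subgraph with no separating vertex (a vertex whose removal disconnects it), maximal with respect to inclusion among such subgraphs. A standard big chunk parabolic is $A_\Lambda$ for a big chunk $\Lambda$. *)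

(* Artin groups given by presentation: elements are words in
   generators and their inverses, equality in A_Gamma is the congruence
   generated by free cancellation and the Artin relations. *)
From mathcomp Require Import all_boot.
Set Implicit Arguments. Unset Strict Implicit. Unset Printing Implicit Defensive.

Section Artin.
Variable T : finType.

(* a letter (x, false) is the generator x, (x, true) is x^-1 *)
Definition word := seq (T * bool).

Definition winv (w : word) : word := rev (map (fun l => (l.1, ~~ l.2)) w).

Definition alt_prod (u v : T) (n : nat) : word :=
  mkseq (fun i => if odd i then (v, false) else (u, false)) n.

Variables (e : rel T) (m : T -> T -> nat).

Inductive artin_eq : word -> word -> Prop :=
| ae_refl w : artin_eq w w
| ae_sym w1 w2 : artin_eq w1 w2 -> artin_eq w2 w1
| ae_trans w1 w2 w3 : artin_eq w1 w2 -> artin_eq w2 w3 -> artin_eq w1 w3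
| ae_cancel u w x b : artin_eq (u ++ (x, b) :: (x, ~~ b) :: w) (u ++ w)
| ae_rel u w a b : e a b ->
    artin_eq (u ++ alt_prod a b (m a b) ++ w) (u ++ alt_prod b a (m a b) ++ w).

Definition word_in (S : {set T}) (w : word) : bool := all (fun l => l.1 \in S) w.

Definition in_parabolic (S : {set T}) (g : word) : Prop :=
  exists w, word_in S w /\ artin_eq g w.

Definition induced (S : {set T}) : rel T := [rel x y | [&& e x y, x \in S & y \in S]].

Definition connected_in (S : {set T}) : Prop :=
  forall a b, a \in S -> b \in S -> connect (induced S) a b.

Definition chunk (S : {set T}) : Prop :=
  [/\ S != set0, connected_in S & forall v, v \in S -> connected_in (S :\ v)].

Definition big_chunk (S : {set T}) : Prop :=
  chunk S /\ forall S', chunk S' -> S \subset S' -> S' = S.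

End Artin.

(* Induct on a connected vertex set S, for big chunks of the graph induced on S.
   If S has no cut vertex, S is itself the only big chunk. Otherwise S splits at a
   cut vertex v into S1 and S2, meeting in v with no edge between S1 \ v and S2 \ v,
   so that A_S = A_S1 *_<v> A_S2 and every chunk lies on one side, say H in S1.
   Reduced forms in this amalgam show that k lies in A_S1, because H contains two
   adjacent generators, which cannot both be conjugated into <v> inside A_S1.
   If V lay in S2, the retraction of A_S onto A_S2 sending S1 to v would turn the
   conjugates of these two generators by k into v, making them equal in A_S, which
   the Tits representation rules out. Hence V lies in S1, and the retraction onto
   A_S1 reduces the claim to the induction hypothesis for S1. *)

From Stdlib Require Import Reals Lra ZArith Lia.
From Stdlib Require Import Classical ClassicalEpsilon FunctionalExtensionality PropExtensionality.
From mathcomp Require Import all_boot.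
Set Implicit Arguments. Unset Strict Implicit. Unset Printing Implicit Defensive.

Section Words.
Variables (T : finType) (m : T -> T -> nat).
Implicit Types (e : rel T) (u w : word T).

Definition act_word (X : Type) (act : T -> bool -> X -> X) w (p : X) : X :=
  foldr (fun l q => act l.1 l.2 q) p w.

Lemma act_word_cat X (act : T -> bool -> X -> X) w1 w2 p :
  act_word act (w1 ++ w2) p = act_word act w1 (act_word act w2 p).
Proof. exact: foldr_cat. Qed.

Lemma alt_prodS (a b : T) k : alt_prod a b k.+1 = (a, false) :: alt_prod b a k.
Proof.
rewrite /alt_prod /mkseq /= -[1]addn0 iotaDl -map_comp; congr cons.
by apply: eq_map => i /=; rewrite add0n; case: (odd i).
Qed.

Lemma act_word_artin e X (P : X -> Prop) (act : T -> bool -> X -> X) :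
  (forall x b p, P p -> P (act x b p)) ->
  (forall x b p, P p -> act x b (act x (~~ b) p) = p) ->
  (forall a b p, e a b -> P p ->
     act_word act (alt_prod a b (m a b)) p = act_word act (alt_prod b a (m a b)) p) ->
  forall w1 w2, artin_eq e m w1 w2 -> forall p, P p -> act_word act w1 p = act_word act w2 p.
Proof.
move=> actP actK act_braid.
have act_wordP w p : P p -> P (act_word act w p).
  by elim: w => [|[x b] w IH] //= Pp; apply/actP/IH.
move=> w1 w2; elim=> {w1 w2} //.
- by move=> w1 w2 _ IH p Pp; rewrite IH.
- by move=> w1 w2 w3 _ IH1 _ IH2 p Pp; rewrite IH1 // IH2.
- by move=> u w x b p Pp; rewrite !act_word_cat /= actK //; apply: act_wordP.
- move=> u w a b eab p Pp; rewrite !act_word_cat; congr (act_word act u _).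
  by apply: act_braid => //; apply: act_wordP.
Qed.

Lemma ae_ctx e w1 w2 u u' :
  artin_eq e m w1 w2 -> artin_eq e m (u ++ w1 ++ u') (u ++ w2 ++ u').
Proof.
elim=> {w1 w2}.
- by move=> w; apply: ae_refl.
- by move=> w1 w2 _; apply: ae_sym.
- by move=> w1 w2 w3 _ IH1 _; apply: ae_trans.
- move=> v w x b.
  have -> : u ++ (v ++ [:: (x, b), (x, ~~ b) & w]) ++ u' =
            (u ++ v) ++ [:: (x, b), (x, ~~ b) & w ++ u'] by rewrite -!catA.
  have -> : u ++ (v ++ w) ++ u' = (u ++ v) ++ (w ++ u') by rewrite -!catA.
  exact: ae_cancel.
- move=> v w a b eab.
  have reassoc z : u ++ (v ++ z ++ w) ++ u' = (u ++ v) ++ z ++ (w ++ u').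
    by rewrite -!catA.
  by rewrite !reassoc; apply: ae_rel.
Qed.

Lemma ae_catl e w1 w2 u : artin_eq e m w1 w2 -> artin_eq e m (u ++ w1) (u ++ w2).
Proof. by move/(ae_ctx u [::]); rewrite !cats0. Qed.

Lemma ae_catr e w1 w2 u : artin_eq e m w1 w2 -> artin_eq e m (w1 ++ u) (w2 ++ u).
Proof. exact: ae_ctx [::] u. Qed.

Lemma ae_cat e w1 w2 w3 w4 : artin_eq e m w1 w2 -> artin_eq e m w3 w4 ->
  artin_eq e m (w1 ++ w3) (w2 ++ w4).
Proof. by move=> /(ae_catr w3) H1 /(ae_catl w2); apply: ae_trans. Qed.

Lemma winv_cat w1 w2 : winv (w1 ++ w2) = winv w2 ++ winv w1.
Proof. by rewrite /winv map_cat rev_cat. Qed.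

Lemma winv_cons l w : winv (l :: w) = winv w ++ [:: (l.1, ~~ l.2)].
Proof. by rewrite /winv /= rev_cons cats1. Qed.

Lemma winvK : involutive (@winv T).
Proof.
move=> w; rewrite /winv map_rev revK -map_comp map_id_in // => [[x b]] _ /=.
by rewrite negbK.
Qed.

Lemma ae_invr e w : artin_eq e m (w ++ winv w) [::].
Proof.
elim: w => [|[x b] w IH] /=; first exact: ae_refl.
rewrite winv_cons.
have -> : (x, b) :: w ++ winv w ++ [:: (x, ~~ b)] =
          [:: (x, b)] ++ (w ++ winv w) ++ [:: (x, ~~ b)] by rewrite /= catA.
apply: ae_trans (ae_ctx _ _ IH) _.
exact: (ae_cancel e m [::] [::] x b).
Qed.

Lemma ae_invl e w : artin_eq e m (winv w ++ w) [::].
Proof. by have := ae_invr e (winv w); rewrite winvK. Qed.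

Lemma ae_conjK e a z : artin_eq e m (a ++ (winv a ++ z ++ a) ++ winv a) z.
Proof.
have -> : a ++ (winv a ++ z ++ a) ++ winv a = (a ++ winv a) ++ z ++ (a ++ winv a).
  by rewrite -!catA.
rewrite -[X in artin_eq _ _ _ X]cats0 -[X in artin_eq _ _ _ X]cat0s.
by apply: ae_cat; [exact: ae_invr | apply: ae_catl; exact: ae_invr].
Qed.

Lemma ae_winv e w1 w2 : artin_eq e m w1 w2 -> artin_eq e m (winv w1) (winv w2).
Proof.
move=> H; apply: ae_trans (_ : artin_eq e m _ (winv w1 ++ (w2 ++ winv w2))) _.
  by rewrite -{1}[winv w1]cats0; apply/ae_catl/ae_sym/ae_invr.
apply: ae_trans (_ : artin_eq e m _ ((winv w1 ++ w1) ++ winv w2)) _.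
  by rewrite -catA; apply/ae_catl/ae_catr/ae_sym.
by rewrite -[X in artin_eq _ _ _ X]cat0s; apply/ae_catr/ae_invl.
Qed.

Lemma ae_mono e e' w1 w2 : subrel e e' -> artin_eq e m w1 w2 -> artin_eq e' m w1 w2.
Proof.
move=> sub; elim=> {w1 w2}.
- by move=> w; apply: ae_refl.
- by move=> w1 w2 _; apply: ae_sym.
- by move=> w1 w2 w3 _ IH1 _; apply: ae_trans.
- by move=> *; apply: ae_cancel.
- by move=> u w a b /sub; apply: ae_rel.
Qed.

Definition wmap (f : T -> T) w : word T := map (fun l => (f l.1, l.2)) w.

Lemma wmap_cat f w1 w2 : wmap f (w1 ++ w2) = wmap f w1 ++ wmap f w2.
Proof. exact: map_cat. Qed.

Lemma wmap_winv f w : wmap f (winv w) = winv (wmap f w).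
Proof. by rewrite /wmap /winv map_rev -!map_comp. Qed.

Lemma wmap_alt f a b k : wmap f (alt_prod a b k) = alt_prod (f a) (f b) k.
Proof. by elim: k a b => [|k IH] a b //; rewrite !alt_prodS /= IH. Qed.

Lemma ae_wmap e e' f w1 w2 :
  (forall a b, e a b ->
     artin_eq e' m (alt_prod (f a) (f b) (m a b)) (alt_prod (f b) (f a) (m a b))) ->
  artin_eq e m w1 w2 -> artin_eq e' m (wmap f w1) (wmap f w2).
Proof.
move=> f_braid; elim=> {w1 w2}.
- by move=> w; apply: ae_refl.
- by move=> w1 w2 _; apply: ae_sym.
- by move=> w1 w2 w3 _ IH1 _; apply: ae_trans.
- by move=> u w x b; rewrite !wmap_cat; apply: ae_cancel.
- by move=> u w a b eab; rewrite !wmap_cat !wmap_alt; apply/ae_ctx/f_braid.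
Qed.

Lemma wmap_id_in (S : {set T}) (f : T -> T) w : {in S, forall x, f x = x} -> word_in S w -> wmap f w = w.
Proof. by move=> fid /allP wS; apply: map_id_in => -[x b] /wS /fid /= ->. Qed.

Lemma word_in_cat (S : {set T}) w1 w2 :
  word_in S (w1 ++ w2) = word_in S w1 && word_in S w2.
Proof. exact: all_cat. Qed.

Lemma word_in_winv (S : {set T}) w : word_in S (winv w) = word_in S w.
Proof. by rewrite /word_in /winv all_rev all_map. Qed.

Lemma word_in_nseq (S : {set T}) x b k : x \in S -> word_in S (nseq k (x, b)).
Proof. by move=> xS; rewrite /word_in all_nseq /= xS orbT. Qed.

Lemma word_in_alt (S : {set T}) a b k :
  a \in S -> b \in S -> word_in S (alt_prod a b k).
Proof. by elim: k a b => [|k IH] a b aS bS //; rewrite alt_prodS /= aS IH. Qed.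

Lemma word_in_sub (S S' : {set T}) w : S \subset S' -> word_in S w -> word_in S' w.
Proof. by move=> /subsetP sub; apply: sub_all => l /sub. Qed.

End Words.

Fixpoint alt_comp (Y : Type) (s t : Y -> Y) (k : nat) (y : Y) : Y :=
  if k is k'.+1 then s (alt_comp t s k' y) else y.

Lemma alt_comp_double Y (s t : Y -> Y) j y :
  alt_comp s t j.*2 y = iter j (fun z => s (t z)) y.
Proof. by elim: j => [|j IH] //=; rewrite IH. Qed.

Lemma alt_comp_double_odd Y (s t : Y -> Y) j y :
  alt_comp s t j.*2.+1 y = iter j (fun z => s (t z)) (s y).
Proof. by elim: j => [|j IH] //=; rewrite -IH. Qed.

Lemma alt_comp_braid Y (s t : Y -> Y) k :
  involutive s -> involutive t -> (forall y, iter k (fun z => s (t z)) y = y) ->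
  forall y, alt_comp s t k y = alt_comp t s k y.
Proof.
move=> sK tK st_k.
set st := fun z => s (t z); set ts := fun z => t (s z).
have tsK j y : iter j ts (iter j st y) = y.
  by elim: j y => [|j IH] y //=; rewrite -iterS iterSr /st /ts /= sK tK.
rewrite -(odd_double_half k) in st_k *; case: (odd k) st_k => st_k y; rewrite ?add0n ?add1n in st_k *.
- rewrite !alt_comp_double_odd -/st -/ts.
  have -> : t y = ts (s y) by rewrite /ts sK.
  by rewrite -iterSr -{2}(st_k (s y)) -addnn -addSn iterD tsK.
- by rewrite !alt_comp_double -/st -/ts -{2}(st_k y) -addnn iterD tsK.
Qed.

Section DihedralRotation.
Local Open Scope R_scope.

Definition refl_a (c : R) (w : R * R) : R * R := (- w.1, w.2 + 2 * c * w.1).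
Definition refl_b (c : R) (w : R * R) : R * R := (w.1 + 2 * c * w.2, - w.2).
Definition rot (c : R) (w : R * R) : R * R := refl_a c (refl_b c w).

Lemma refl_aK c : involutive (refl_a c).
Proof. by case=> x y; rewrite /refl_a /=; f_equal; ring. Qed.

Lemma refl_bK c : involutive (refl_b c).
Proof. by case=> x y; rewrite /refl_b /=; f_equal; ring. Qed.

Lemma sin_double_rec th k :
  sin (2 * INR k.+2 * th) =
  2 * (2 * cos th * cos th - 1) * sin (2 * INR k.+1 * th) - sin (2 * INR k * th).
Proof.
have -> : 2 * INR k.+2 * th = 2 * INR k.+1 * th + 2 * th by rewrite (S_INR k.+1); ring.
have -> : 2 * INR k * th = 2 * INR k.+1 * th - 2 * th by rewrite (S_INR k); ring.
rewrite sin_plus sin_minus -cos_2a_cos; ring.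
Qed.

(* rot (cos th) is a rotation by 2 th, so its iterates follow the
   Chebyshev-type recurrence of sin (2 k th). *)
Lemma sin_iter_rot th k w (u := iter k.+1 (rot (cos th)) w) :
  sin (2 * th) * u.1 = sin (2 * INR k.+1 * th) * (rot (cos th) w).1 - sin (2 * INR k * th) * w.1 /\
  sin (2 * th) * u.2 = sin (2 * INR k.+1 * th) * (rot (cos th) w).2 - sin (2 * INR k * th) * w.2.
Proof.
rewrite {}/u; elim: k => [|k [IH1 IH2]].
  have -> : 2 * INR 1 * th = 2 * th by rewrite /=; ring.
  by rewrite Rmult_0_r Rmult_0_l sin_0 /=; split; ring.
rewrite iterS sin_double_rec; set u := iter k.+1 _ w in IH1 IH2 *.
split.
- transitivity (- (sin (2 * th) * u.1) - 2 * cos th * (sin (2 * th) * u.2)).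
    by rewrite /rot /refl_a /refl_b /=; ring.
  by rewrite IH1 IH2 /rot /refl_a /refl_b /=; ring.
- transitivity (2 * cos th * (sin (2 * th) * u.1) + (4 * cos th * cos th - 1) * (sin (2 * th) * u.2)).
    by rewrite /rot /refl_a /refl_b /=; ring.
  by rewrite IH1 IH2 /rot /refl_a /refl_b /=; ring.
Qed.

Lemma rot_order (n : nat) w : (2 <= n)%N -> iter n (rot (cos (PI / INR n))) w = w.
Proof.
case: n => [|[|[|n]]] // _.
  have -> : INR 2 = 2 by rewrite S_INR /=; ring.
  by rewrite cos_PI2 /rot /refl_a /refl_b; case: w => x y /=; f_equal; ring.
set th := PI / INR n.+3.
have hn : 3 <= INR n.+3 by rewrite !S_INR; have := pos_INR n; lra.
have hPI := PI_RGT_0.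
have th_n : INR n.+3 * th = PI by rewrite /th; field; lra.
have s2th : 0 < sin (2 * th).
  apply: sin_gt_0; first by apply: Rmult_lt_0_compat; [lra | apply: Rdiv_lt_0_compat; lra].
  have : 3 * th <= INR n.+3 * th by apply: Rmult_le_compat_r; [apply: Rlt_le; apply: Rdiv_lt_0_compat|]; lra.
  lra.
have [C1 C2] := sin_iter_rot th n.+2 w.
have S1 : sin (2 * INR n.+3 * th) = 0.
  by rewrite Rmult_assoc th_n sin_2PI.
have S2 : sin (2 * INR n.+2 * th) = - sin (2 * th).
  have -> : 2 * INR n.+2 * th = 2 * PI - 2 * th by rewrite -th_n (S_INR n.+2); ring.
  by rewrite sin_minus sin_2PI cos_2PI; ring.
rewrite S1 S2 in C1 C2.
move: C1 C2; case: (iter _ _ w) => x' y'; case: w => x y /= C1 C2.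
by f_equal; apply: (Rmult_eq_reg_l (sin (2 * th))); lra.
Qed.

Lemma sqr_cos_PI_div_lt1 (n : nat) : (2 <= n)%N -> cos (PI / INR n) ^ 2 < 1.
Proof.
move=> hn; have hn' : 2 <= INR n by apply: (le_INR 2 n); apply/leP.
have hPI := PI_RGT_0.
have th_pos : 0 < PI / INR n by apply: Rdiv_lt_0_compat; lra.
have th_lt : PI / INR n < PI.
  apply: (Rmult_lt_reg_r (INR n)); first lra.
  rewrite /Rdiv Rmult_assoc Rinv_l; nra.
have := sin_gt_0 _ th_pos th_lt; have := sin2_cos2 (PI / INR n); rewrite /Rsqr; nra.
Qed.

End DihedralRotation.


Section TitsRepresentation.
Variables (T : finType) (e : rel T) (m : T -> T -> nat).
Hypotheses (e_sym : symmetric e) (e_irr : irreflexive e).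
Hypotheses (m_sym : forall a b, m a b = m b a) (m_ge2 : forall a b, e a b -> 2 <= m a b).
Local Open Scope R_scope.

Definition tits_cos (a b : T) : R := cos (PI / INR (m a b)).

Definition tits_form (u x : T) : R :=
  if u == x then 1 else if e u x then - tits_cos u x else 0.

(* x and x^-1 act alike, s_x being an involution; hence the unused boolean. *)
Definition tits_refl (x : T) (_ : bool) (p : T -> R) : T -> R :=
  fun u => p u - 2 * tits_form u x * p x.

Lemma tits_form_diag x : tits_form x x = 1.
Proof. by rewrite /tits_form eqxx. Qed.

Lemma tits_reflK x b b' p : tits_refl x b (tits_refl x b' p) = p.
Proof. by apply: functional_extensionality => u; rewrite /tits_refl tits_form_diag; ring. Qed.

Section Edge.
Variables (a b : T) (p : T -> R).
Hypothesis eab : e a b.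
Let c := tits_cos a b.

Lemma tits_form_ab : tits_form a b = - c.
Proof. by rewrite /tits_form eab; case: eqP => // Eab; move: eab; rewrite Eab e_irr. Qed.

Lemma tits_form_ba : tits_form b a = - c.
Proof.
rewrite /tits_form e_sym eab /c /tits_cos m_sym.
by case: eqP => // Eba; move: eab; rewrite Eba e_irr.
Qed.

(* s_a and s_b preserve the affine plane p + span (tits_form ^~ a, tits_form ^~ b). *)
Definition plane_pt (z : R * R) : T -> R := fun u => p u + z.1 * tits_form u a + z.2 * tits_form u b.
Definition plane_sa (z : R * R) : R * R := (z.1 - 2 * (p a + z.1 - c * z.2), z.2).
Definition plane_sb (z : R * R) : R * R := (z.1, z.2 - 2 * (p b - c * z.1 + z.2)).

Lemma tits_refl_a z bo : tits_refl a bo (plane_pt z) = plane_pt (plane_sa z).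
Proof.
apply: functional_extensionality => u.
by rewrite /tits_refl /plane_pt /plane_sa /= tits_form_diag tits_form_ab; ring.
Qed.

Lemma tits_refl_b z bo : tits_refl b bo (plane_pt z) = plane_pt (plane_sb z).
Proof.
apply: functional_extensionality => u.
by rewrite /tits_refl /plane_pt /plane_sb /= tits_form_diag tits_form_ba; ring.
Qed.

Lemma act_word_alt_plane k z :
  act_word tits_refl (alt_prod a b k) (plane_pt z) = plane_pt (alt_comp plane_sa plane_sb k z) /\
  act_word tits_refl (alt_prod b a k) (plane_pt z) = plane_pt (alt_comp plane_sb plane_sa k z).
Proof.
elim: k z => [|k IH] z //; rewrite !alt_prodS /=.
by case: (IH z) => -> ->; rewrite tits_refl_a tits_refl_b.
Qed.

(* In these coordinates s_a and s_b become the linear reflections refl_a c and refl_b c. *)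
Definition plane_coord (z : R * R) : R * R := (p a + z.1 - c * z.2, p b - c * z.1 + z.2).

Lemma plane_coord_alt k z :
  plane_coord (alt_comp plane_sa plane_sb k z) = alt_comp (refl_a c) (refl_b c) k (plane_coord z) /\
  plane_coord (alt_comp plane_sb plane_sa k z) = alt_comp (refl_b c) (refl_a c) k (plane_coord z).
Proof.
elim: k => [|k [IH1 IH2]] //=; rewrite -IH1 -IH2.
by split; rewrite /plane_coord /plane_sa /plane_sb /refl_a /refl_b /=; f_equal; ring.
Qed.

Lemma plane_coord_inj : injective plane_coord.
Proof.
case=> [x1 y1] [x2 y2]; rewrite /plane_coord /= => -[E1 E2].
have hc : c ^ 2 < 1 := sqr_cos_PI_div_lt1 (m_ge2 eab).
have d2 : y1 - y2 = c * (x1 - x2) by lra.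
have dx : (1 - c ^ 2) * (x1 - x2) = 0.
  by replace ((1 - c ^ 2) * (x1 - x2)) with (x1 - x2 - c * (y1 - y2)) by (rewrite d2; ring); lra.
have ex : x1 = x2 by case: (Rmult_integral _ _ dx) => H; lra.
by subst x2; f_equal; lra.
Qed.

Lemma tits_refl_braid :
  act_word tits_refl (alt_prod a b (m a b)) p = act_word tits_refl (alt_prod b a (m a b)) p.
Proof.
have -> : p = plane_pt (0, 0) by apply: functional_extensionality => u; rewrite /plane_pt /=; ring.
case: (act_word_alt_plane (m a b) (0, 0)) => -> ->; congr plane_pt.
apply: plane_coord_inj; case: (plane_coord_alt (m a b) (0, 0)) => -> ->.
apply: alt_comp_braid; [exact: refl_aK | exact: refl_bK |].
by move=> w; apply: (rot_order w (m_ge2 eab)).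
Qed.

End Edge.

Lemma artin_gen_inj (e' : rel T) x y : subrel e' e ->
  artin_eq e' m [:: (x, false)] [:: (y, false)] -> x = y.
Proof.
move=> sub /(act_word_artin (P := fun _ => True) (act := tits_refl)).
move=> /(_ (fun _ _ _ _ => I) (fun x b p _ => tits_reflK x b (~~ b) p)).
move=> /(_ (fun a b p eab _ => tits_refl_braid p (sub _ _ eab))).
move=> /(_ (fun u => if u == x then 1 else 0) I) /(congr1 (fun f => f x)).
rewrite /= /tits_refl eqxx tits_form_diag.
by case: eqP => // _; lra.
Qed.

End TitsRepresentation.

Section ExponentSum.
Variables (T : finType) (m : T -> T -> nat).
Implicit Types (e : rel T) (w : word T).
Local Open Scope Z_scope.

Definition letter_sign (b : bool) : Z := if b then -1 else 1.

Definition exp_sum w : Z := act_word (fun _ b z => letter_sign b + z) w 0.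

Lemma exp_sum_nil : exp_sum [::] = 0.
Proof. by []. Qed.

Lemma exp_sum_cons x b w : exp_sum ((x, b) :: w) = letter_sign b + exp_sum w.
Proof. by []. Qed.

Lemma exp_sum_cat w1 w2 : exp_sum (w1 ++ w2) = exp_sum w1 + exp_sum w2.
Proof. by elim: w1 => [|[x b] w1 IH] //; rewrite cat_cons !exp_sum_cons IH; lia. Qed.

Lemma exp_sum_winv w : exp_sum (winv w) = - exp_sum w.
Proof.
elim: w => [|[x b] w IH] //.
have -> : winv ((x, b) :: w) = winv w ++ [:: (x, ~~ b)] by exact: winv_cons.
rewrite exp_sum_cat IH !exp_sum_cons exp_sum_nil.
by case: b; rewrite /letter_sign /negb; lia.
Qed.

Lemma exp_sum_alt a b k : exp_sum (alt_prod a b k) = Z.of_nat k.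
Proof. by elim: k a b => [|k IH] a b //; rewrite alt_prodS exp_sum_cons IH; cbv [letter_sign]; lia. Qed.

Lemma ae_exp_sum e w1 w2 : artin_eq e m w1 w2 -> exp_sum w1 = exp_sum w2.
Proof.
have act_exp_sum w z : act_word (fun _ b z => letter_sign b + z) w z = exp_sum w + z.
  by elim: w z => [|[x b] w IH] z //; rewrite [LHS]/= IH exp_sum_cons; lia.
move=> H; apply: (act_word_artin (P := fun _ => True)) H 0 I => //.
- by move=> x b p _; case: b; cbv [letter_sign negb]; lia.
- by move=> a b p _ _; rewrite !act_exp_sum !exp_sum_alt.
Qed.

Variable v : T.

Definition vpow (n : Z) : word T :=
  if 0 <=? n then nseq (Z.to_nat n) (v, false) else nseq (Z.to_nat (- n)) (v, true).

Lemma exp_sum_vpow n : exp_sum (vpow n) = n.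
Proof.
have exp_sum_nseq k b : exp_sum (nseq k (v, b)) = Z.of_nat k * letter_sign b.
  by elim: k => [|k IH] //; rewrite [nseq _ _]/= exp_sum_cons IH; lia.
by rewrite /vpow; case: Z.leb_spec => h; rewrite exp_sum_nseq /=; lia.
Qed.

Lemma ae_vpowS e n b : artin_eq e m ((v, b) :: vpow n) (vpow (n + letter_sign b)).
Proof.
rewrite /vpow; case: b => /=; case: (Z.leb_spec 0 n) => h.
- case: (Z.leb_spec 0 (n + -1)) => h'.
  + have -> : Z.to_nat n = (Z.to_nat (n + -1)).+1 by lia.
    exact: (ae_cancel e m [::] _ v true).
  + have -> : Z.to_nat n = 0%nat by lia.
    have -> : Z.to_nat (- (n + -1)) = 1%nat by lia.
    exact: ae_refl.
- case: (Z.leb_spec 0 (n + -1)) => h'; first lia.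
  have -> : Z.to_nat (- (n + -1)) = (Z.to_nat (- n)).+1 by lia.
  exact: ae_refl.
- case: (Z.leb_spec 0 (n + 1)) => h'; last lia.
  have -> : Z.to_nat (n + 1) = (Z.to_nat n).+1 by lia.
  exact: ae_refl.
- case: (Z.leb_spec 0 (n + 1)) => h'.
  + have -> : Z.to_nat (- n) = 1%nat by lia.
    have -> : Z.to_nat (n + 1) = 0%nat by lia.
    exact: (ae_cancel e m [::] [::] v false).
  + have -> : Z.to_nat (- n) = (Z.to_nat (- (n + 1))).+1 by lia.
    exact: (ae_cancel e m [::] _ v false).
Qed.

Lemma ae_vpowD e n n' : artin_eq e m (vpow n ++ vpow n') (vpow (n + n')).
Proof.
have step b n0 (IH : artin_eq e m (vpow n0 ++ vpow n') (vpow (n0 + n'))) :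
    artin_eq e m (vpow (n0 + letter_sign b) ++ vpow n') (vpow (n0 + letter_sign b + n')).
  apply: ae_trans (_ : artin_eq e m (((v, b) :: vpow n0) ++ vpow n') _).
    exact/ae_catr/ae_sym/ae_vpowS.
  apply: ae_trans (ae_catl [:: (v, b)] IH) _.
  by rewrite (_ : n0 + letter_sign b + n' = n0 + n' + letter_sign b); [apply: ae_vpowS | lia].
elim/Z.peano_ind: n => [|n IH|n IH]; first exact: ae_refl.
- by have := step false n IH; rewrite /= Z.add_1_r.
- by have := step true n IH; rewrite /= -Z.sub_1_r.
Qed.

Lemma ae_vpow_opp e n : artin_eq e m (vpow n ++ vpow (- n)) [::].
Proof. by have := ae_vpowD e n (- n); rewrite Z.add_opp_diag_r. Qed.

End ExponentSum.

Section Chunks.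
Variables (T : finType) (e : rel T).
Hypothesis e_sym : symmetric e.

Lemma induced_sym (X : {set T}) : symmetric (induced e X).
Proof. by move=> x y; rewrite /induced /= e_sym; case: (x \in X); rewrite ?andbT ?andbF. Qed.

Lemma induced_sub (X Y : {set T}) : X \subset Y -> subrel (induced e X) (induced e Y).
Proof. by move=> /subsetP sub x y; rewrite /induced /= => /and3P [-> /sub -> /sub ->]. Qed.

Lemma connect_induced_in (X : {set T}) a z : a \in X -> connect (induced e X) a z -> z \in X.
Proof.
move=> aX /connectP [p pth ->]; elim: p a aX pth => [|y p IH] a aX //=.
by case/andP => /and3P [_ _ yX]; apply: IH.
Qed.

Definition big_chunk_in (S X : {set T}) :=
  [/\ X \subset S, chunk e X & forall X', chunk e X' -> X \subset X' -> X' \subset S -> X' = X].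

Lemma big_chunk_inT X : big_chunk e X -> big_chunk_in setT X.
Proof. by case=> cX maxX; split => [|//|X' cX' XX' _]; [apply: subsetT | apply: maxX]. Qed.

Lemma big_chunk_in_sub (S S' X : {set T}) :
  X \subset S' -> S' \subset S -> big_chunk_in S X -> big_chunk_in S' X.
Proof.
move=> XS' S'S [_ cX maxX]; split => // X' cX' XX' X'S'.
by apply: maxX => //; apply: subset_trans S'S.
Qed.

Lemma chunk_edge x y : e x y -> chunk e [set x; y].
Proof.
move=> exy; have yx : e y x by rewrite e_sym.
have in2 z : z \in [set x; y] -> z = x \/ z = y by rewrite !inE => /orP [] /eqP; auto.
split.
- by apply/set0Pn; exists x; rewrite !inE eqxx.
- move=> a b /in2 [] -> /in2 [] ->; try exact: connect0;
    by apply: connect1; rewrite /induced /= ?exy ?yx !inE !eqxx ?orbT.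
- move=> u /in2 Hu a b; rewrite !inE => /andP [au /orP [] /eqP Ea] /andP [bu /orP [] /eqP Eb];
    subst a b; try exact: connect0;
    by case: Hu => Eu; subst u; rewrite ?eqxx in au bu.
Qed.

Lemma big_chunk_in_edge (S X : {set T}) : connected_in e S -> 1 < #|S| ->
  big_chunk_in S X -> exists x y, [/\ x \in X, y \in X & e x y].
Proof.
move=> cS cardS [XS [/set0Pn [h hX] cX _] maxX].
have first_edge (Y : {set T}) x : h \in Y -> connected_in e Y -> x \in Y -> x != h ->
    exists2 y, y \in Y & e h y.
  move=> hY cY xY xh; case/connectP: (cY _ _ hY xY) => p; case: p => [|y p] /= pth Ex.
    by rewrite Ex eqxx in xh.
  by case/andP: pth => /and3P [hy _ yY] _; exists y.
case: (pickP [pred x in X | x != h]) => [x /andP [xX xh] | onlyh].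
  by have [y yX hy] := first_edge X x hX cX xX xh; exists h, y.
have [u [w [uS wS nuw]]] := card_gt1P cardS.
have [x [xS xh]] : exists x, x \in S /\ x != h.
  by case: (eqVneq u h) => [Eu|]; [exists w; rewrite -Eu eq_sym | exists u].
have [y yS hy] := first_edge S x (subsetP XS _ hX) cS xS xh.
have XE : X \subset [set h; y].
  by apply/subsetP => z zX; move: (onlyh z); rewrite /= zX !inE => /negbFE ->.
have hyS : [set h; y] \subset S.
  by apply/subsetP => z; rewrite !inE => /orP [] /eqP -> //; apply: (subsetP XS).
have EX := maxX _ (chunk_edge hy) XE hyS.
by exists h, y; split => //; rewrite -EX !inE eqxx ?orbT.
Qed.

(* Then A_S is the amalgamated product of A_S1 and A_S2 over <v>. *)
Definition split_at (S S1 S2 : {set T}) (v : T) :=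
  [/\ S1 :|: S2 = S, S1 :&: S2 = [set v] &
      forall x y, e x y -> x \in S1 -> y \in S2 -> x = v \/ y = v].

Lemma split_at_sym S S1 S2 v : split_at S S1 S2 v -> split_at S S2 S1 v.
Proof.
case=> U I cross; split; rewrite 1?setUC 1?setIC //.
by move=> x y; rewrite e_sym => /cross /[apply] /[apply] -[]; auto.
Qed.

Section Split.
Variables (S S1 S2 : {set T}) (v : T).
Hypothesis spl : split_at S S1 S2 v.

Lemma split_v1 : v \in S1.
Proof. by case: spl => _ I _; have := set11 v; rewrite -I => /setIP []. Qed.

Lemma split_v2 : v \in S2.
Proof. by case: spl => _ I _; have := set11 v; rewrite -I => /setIP []. Qed.

Lemma split_sub1 : S1 \subset S.
Proof. by case: spl => <- _ _; apply: subsetUl. Qed.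

Lemma split_sub2 : S2 \subset S.
Proof. by case: spl => <- _ _; apply: subsetUr. Qed.

Lemma split_cover x : x \in S -> (x \in S1) || (x \in S2).
Proof. by case: spl => <- _ _; rewrite inE. Qed.

Lemma split_meet x : x \in S1 -> x \in S2 -> x = v.
Proof. by case: spl => _ I _ x1 x2; apply/set1P; rewrite -I inE x1. Qed.

Lemma split_edge x y : e x y -> x \in S1 -> y \in S2 -> x = v \/ y = v.
Proof. by case: spl => _ _; apply. Qed.

Lemma split_closed : closed (induced e (S :\ v)) S1.
Proof.
move=> x y /and3P [exy]; rewrite !inE => /andP [xv xS] /andP [yv yS].
have keep z z' : e z z' -> z != v -> z' != v -> z' \in S -> z \in S1 -> z' \in S1.
  move=> ez zv z'v z'S z1; case/orP: (split_cover z'S) => // z'2.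
  by case: (split_edge ez z1 z'2) => E; move: zv z'v; rewrite E eqxx.
by apply/idP/idP; apply: keep => //; rewrite e_sym.
Qed.

Lemma connected_split1 : connected_in e S -> connected_in e S1.
Proof.
move=> cS; have S1S := subsetP split_sub1.
have to_v x : x \in S1 -> connect (induced e S1) x v.
  move=> x1; case/connectP: (cS x v (S1S x x1) (S1S v split_v1)) => p.
  elim: p x x1 => [|y p IH] x x1 /=; first by move=> _ ->.
  case/andP => /and3P [exy xS yS] pth Elast.
  have [-> | xv] := eqVneq x v; first exact: connect0.
  have y1 : y \in S1.
    have [-> | yv] := eqVneq y v; first exact: split_v1.
    by rewrite -(split_closed (x := x)) // /induced /= exy !inE xv yv xS yS.
  by apply: connect_trans (IH y y1 pth Elast); apply: connect1; rewrite /induced /= exy x1 y1.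
move=> x y x1 y1; apply: connect_trans (to_v x x1) _.
by rewrite (sym_connect_sym (induced_sym S1)) to_v.
Qed.

Lemma chunk_split_side X : chunk e X -> X \subset S -> X \subset S1 \/ X \subset S2.
Proof.
case=> _ cX dX XS; have [X1 | /subsetPn [x xX x1]] := boolP (X \subset S1); first by left.
right; apply/subsetP => y yX; apply/negPn/negP => y2.
have xv : x != v by apply: contraNneq x1 => ->; exact: split_v1.
have yv : y != v by apply: contraNneq y2 => ->; exact: split_v2.
have y1 : y \in S1 by have := split_cover (subsetP XS y yX); rewrite (negbTE y2) orbF.
have via (Y : {set T}) : Y \subset S :\ v -> connected_in e Y -> y \in Y -> x \in Y ->
    connect (induced e (S :\ v)) y x.
  move=> YS cY yY xY; apply: connect_sub (cY _ _ yY xY) => p q pq.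
  exact/connect1/(induced_sub YS).
have yx : connect (induced e (S :\ v)) y x.
  case: (boolP (v \in X)) => vX.
    by apply: (via (X :\ v)); [exact: setSD | exact: dX | rewrite !inE yv | rewrite !inE xv].
  apply: (via X) => //; apply/subsetP => z zX; rewrite !inE (subsetP XS) // andbT.
  by apply: contraNneq vX => <-.
by move: x1; rewrite -(closed_connect split_closed yx) y1.
Qed.

End Split.

Lemma cut_vertex_split (S : {set T}) v : v \in S -> ~ connected_in e (S :\ v) ->
  exists S1 S2, [/\ split_at S S1 S2 v, S1 \proper S & S2 \proper S].
Proof.
move=> vS ncS; have [a [b [aSv bSv nab]]] : exists a b,
    [/\ a \in S :\ v, b \in S :\ v & ~~ connect (induced e (S :\ v)) a b].
  apply: NNPP => nex; apply: ncS => a b aSv bSv; apply: NNPP => nab.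
  by apply: nex; exists a, b; split => //; apply/negP.
have [[av aS] [bv bS]] := (setD1P aSv, setD1P bSv).
set C := [set z | connect (induced e (S :\ v)) a z].
have CSv z : z \in C -> z \in S :\ v by rewrite inE; apply: connect_induced_in.
have vC : v \notin C by apply/negP => /CSv; rewrite !inE eqxx.
have CS z : z \in C -> z \in S by move/CSv; rewrite inE => /andP [].
exists (v |: C), (S :\: C); split.
- split.
  + apply/setP => z; rewrite in_setU in_setU1 in_setD.
    case: eqP => [-> | _]; first by rewrite vS.
    by case zC: (z \in C) => //=; rewrite CS.
  + apply/setP => z; rewrite in_setI in_setU1 in_setD in_set1.
    case: eqP => [-> | _]; first by rewrite vC vS.
    by case: (z \in C).
  + move=> x y exy; rewrite in_setU1 in_setD => /orP [/eqP -> | xC] /andP [yC yS]; first by left.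
    have [-> | yv] := eqVneq y v; first by right.
    move/negP: yC; case; rewrite inE (connect_trans (_ : connect _ a x)) //; first by rewrite -inE.
    by apply: connect1; rewrite /induced /= exy (CSv x xC) !inE yv yS.
- rewrite properE; apply/andP; split.
    by apply/subsetP => z; rewrite in_setU1 => /orP [/eqP -> // | /CS].
  by apply/subsetPn; exists b; rewrite // !inE negb_or nab bv.
by rewrite properE subsetDl; apply/subsetPn; exists a; rewrite // !inE connect0.
Qed.

End Chunks.

Section Amalgam.
Variables (T : finType) (e : rel T) (m : T -> T -> nat).
Hypothesis e_sym : symmetric e.
Variables (S S1 S2 : {set T}) (v : T).
Hypothesis spl : split_at e S S1 S2 v.

Definition side (i : bool) : {set T} := if i then S2 else S1.

Notation AE := (artin_eq (induced e S) m).
Notation AEi i := (artin_eq (induced e (side i)) m).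
Notation vp := (vpow v).

Lemma side_v i : v \in side i.
Proof. by case: i; [apply: split_v2 spl | apply: split_v1 spl]. Qed.

Lemma ae_side i w1 w2 : AEi i w1 w2 -> AE w1 w2.
Proof.
by apply/ae_mono/induced_sub; case: i; [apply: split_sub2 spl | apply: split_sub1 spl].
Qed.

Lemma word_in_vpow i n : word_in (side i) (vp n).
Proof. by rewrite /vpow; case: Z.leb; apply/word_in_nseq/side_v. Qed.

Lemma induced_edge_side a b : induced e S a b -> exists i, (a \in side i) && (b \in side i).
Proof.
case/and3P => eab aS bS.
case/orP: (split_cover spl aS) => ha; case/orP: (split_cover spl bS) => hb.
- by exists false; rewrite /= ha hb.
- case: (split_edge spl eab ha hb) => E.
    by exists true; rewrite /= hb E (split_v2 spl).
  by exists false; rewrite /= ha E (split_v1 spl).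
- rewrite e_sym in eab; case: (split_edge spl eab hb ha) => E.
    by exists true; rewrite /= ha E (split_v2 spl).
  by exists false; rewrite /= hb E (split_v1 spl).
- by exists true; rewrite /= ha hb.
Qed.

Definition in_vcoset i (r g : word T) := exists n, AEi i g (vp n ++ r).

Lemma in_vcoset_refl i g : in_vcoset i g g.
Proof. by exists 0%Z; apply: ae_refl. Qed.

Lemma ae_in_vcoset i g g' : AEi i g g' -> in_vcoset i g g'.
Proof. by move=> H; exists 0%Z; apply: ae_sym. Qed.

Lemma in_vcoset_sym i r g : in_vcoset i r g -> in_vcoset i g r.
Proof.
case=> n H; exists (- n)%Z; apply: ae_sym; apply: ae_trans (ae_catl _ H) _.
rewrite catA -[r in X in artin_eq _ _ _ X]cat0s; apply: ae_catr.
by have := ae_vpow_opp m v (induced e (side i)) (- n); rewrite Z.opp_involutive.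
Qed.

Lemma in_vcoset_trans i a b c : in_vcoset i a b -> in_vcoset i b c -> in_vcoset i a c.
Proof.
case=> n Hn [n' Hn']; exists (n' + n)%Z.
apply: ae_trans Hn' _; apply: ae_trans (ae_catl _ Hn) _.
by rewrite catA; apply/ae_catr/ae_vpowD.
Qed.

(* These conditions depend only on the coset <v> g, so vrep is constant on cosets. *)
Definition vrep_spec i g r :=
  [/\ in_vcoset i r g, (exists2 g0, in_vcoset i g0 g & word_in (side i) g0) -> word_in (side i) r
    & (in_vcoset i [::] g -> r = [::])].

Definition vrep i g := epsilon (inhabits [::]) (vrep_spec i g).

Lemma vrepP i g : vrep_spec i g (vrep i g).
Proof.
apply: epsilon_spec.
have [g_v | ng_v] := classic (in_vcoset i [::] g); first by exists [::]; split.
have [[g0 g0g wg0] | nw] := classic (exists2 g0, in_vcoset i g0 g & word_in (side i) g0).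
  by exists g0; split => // /ng_v.
by exists g; split=> [|/nw|/ng_v] //; apply: in_vcoset_refl.
Qed.

Lemma vrep_eq i g g' : in_vcoset i g g' -> vrep i g = vrep i g'.
Proof.
move=> gg'; have g'g := in_vcoset_sym gg'.
rewrite /vrep; congr epsilon; apply: functional_extensionality => r.
apply: propositional_extensionality.
by split=> -[h1 h2 h3]; split;
  [ apply: in_vcoset_trans h1 _
  | move=> [g0 c w]; apply: h2; exists g0 => //; apply: in_vcoset_trans c _
  | move=> c; apply: h3; apply: in_vcoset_trans c _
  | apply: in_vcoset_trans h1 _
  | move=> [g0 c w]; apply: h2; exists g0 => //; apply: in_vcoset_trans c _
  | move=> c; apply: h3; apply: in_vcoset_trans c _ ].
Qed.

Lemma in_vcoset_vrep i g : in_vcoset i (vrep i g) g.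
Proof. by case: (vrepP i g). Qed.

Lemma vrepK i g : vrep i (vrep i g) = vrep i g.
Proof. exact/vrep_eq/in_vcoset_vrep. Qed.

Lemma word_in_vrep i g : word_in (side i) g -> word_in (side i) (vrep i g).
Proof. by case: (vrepP i g) => _ h _ wg; apply: h; exists g => //; apply: in_vcoset_refl. Qed.

Lemma vrep_nil i g : in_vcoset i [::] g -> vrep i g = [::].
Proof. by case: (vrepP i g) => _ _. Qed.

Definition vexp i g := epsilon (inhabits 0%Z) (fun n => AEi i g (vp n ++ vrep i g)).

Lemma vexpP i g : AEi i g (vp (vexp i g) ++ vrep i g).
Proof. exact: (epsilon_spec _ _ (in_vcoset_vrep i g)). Qed.

Lemma vexp_uniq i g n : AEi i g (vp n ++ vrep i g) -> vexp i g = n.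
Proof.
move=> /(ae_trans (ae_sym (vexpP i g))) /ae_exp_sum.
by rewrite !exp_sum_cat !exp_sum_vpow; lia.
Qed.

Lemma vexp_eq i g g' : AEi i g g' -> vexp i g = vexp i g'.
Proof.
move=> H; apply: vexp_uniq.
by rewrite (vrep_eq (ae_in_vcoset H)); apply: ae_trans H (vexpP i g').
Qed.

(* A state (n, [:: (i1, t1); ...; (ir, tr)]) stands for v^n t1 ... tr, the tj being
   nontrivial coset representatives taken alternately from the two sides. *)
Definition nf_state := (Z * seq (bool * word T))%type.

Definition nf_word (ts : seq (bool * word T)) : word T := flatten (map snd ts).

Definition nf_eval (s : nf_state) : word T := vp s.1 ++ nf_word s.2.

Definition head_off (i : bool) (ts : seq (bool * word T)) : bool :=
  if ts is (j, _) :: _ then j != i else true.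

Fixpoint reduced (ts : seq (bool * word T)) : Prop :=
  if ts is (i, t) :: r then
    [/\ vrep i t = t, t <> [::], word_in (side i) t, head_off i r & reduced r]
  else True.

Definition split_head i (s : nf_state) : word T * seq (bool * word T) :=
  let: (n, ts) := s in
  if ts is (j, t) :: r then (if j == i then (vp n ++ t, r) else (vp n, ts)) else (vp n, [::]).

Definition nf_cons i h ts : nf_state :=
  (vexp i h, if vrep i h == [::] then ts else (i, vrep i h) :: ts).

Definition side_act i g (s : nf_state) : nf_state :=
  nf_cons i (g ++ (split_head i s).1) (split_head i s).2.

Lemma split_head_off i n ts : head_off i ts -> split_head i (n, ts) = (vp n, ts).
Proof. by case: ts => [|[j t] ts] //= /negbTE ->. Qed.

Lemma split_head_reduced i s :
  reduced s.2 -> head_off i (split_head i s).2 /\ reduced (split_head i s).2.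
Proof.
case: s => n [|[j t] ts] //= red_t.
by case: eqP => [<-|/eqP ji] /=; [case: red_t | split].
Qed.

Lemma word_in_split_head i s : reduced s.2 -> word_in (side i) (split_head i s).1.
Proof.
case: s => n [|[j t] ts] /=; first by rewrite word_in_vpow.
case=> _ _ wt _ _; case: eqP => [<-|_] /=; last exact: word_in_vpow.
by rewrite word_in_cat word_in_vpow.
Qed.

Lemma reduced_nf_cons i h ts :
  reduced ts -> head_off i ts -> word_in (side i) h -> reduced (nf_cons i h ts).2.
Proof.
move=> red off wh /=; case: eqP => // hn /=.
by split => //; [apply: vrepK | apply: word_in_vrep].
Qed.

Lemma split_head_nf_cons i h ts : head_off i ts ->
  (split_head i (nf_cons i h ts)).2 = ts /\ AEi i (split_head i (nf_cons i h ts)).1 h.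
Proof.
move=> off; rewrite /nf_cons; case: eqP => [E|_].
  by rewrite split_head_off //=; split => //; apply: ae_sym; have := vexpP i h; rewrite E cats0.
by rewrite /= eqxx; split => //; apply/ae_sym/vexpP.
Qed.

Lemma nf_cons_eq i h h' ts : AEi i h h' -> nf_cons i h ts = nf_cons i h' ts.
Proof. by move=> H; rewrite /nf_cons (vexp_eq H) (vrep_eq (ae_in_vcoset H)). Qed.

Lemma nf_cons_vpow i n t ts : t = [::] \/ vrep i t = t /\ t <> [::] ->
  nf_cons i (vp n ++ t) ts = (n, if t == [::] then ts else (i, t) :: ts).
Proof.
move=> ht; have rep_t : vrep i (vp n ++ t) = t.
  case: ht => [->|[rep _]]; first by apply: vrep_nil; exists n; rewrite cats0; apply: ae_refl.
  by rewrite -{2}rep; apply: vrep_eq; apply: in_vcoset_sym; exists n; apply: ae_refl.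
rewrite /nf_cons rep_t; by congr pair; apply: vexp_uniq; rewrite rep_t; apply: ae_refl.
Qed.

Lemma nf_cons_split_head i s : reduced s.2 -> nf_cons i (split_head i s).1 (split_head i s).2 = s.
Proof.
case: s => n [|[j t] ts] /=; first by move=> _; rewrite -[vp n]cats0 nf_cons_vpow; auto.
case=> rep_t t0 _ _ _; case: eqP => [<-|_].
  by rewrite nf_cons_vpow; [case: eqP | right].
by rewrite -[vp n]cats0 nf_cons_vpow; auto.
Qed.

Lemma reduced_side_act i g s : reduced s.2 -> word_in (side i) g -> reduced (side_act i g s).2.
Proof.
move=> red wg; have [off red'] := split_head_reduced i red.
by apply: reduced_nf_cons => //; rewrite word_in_cat wg word_in_split_head.
Qed.

Lemma side_act_cat i g g' s : reduced s.2 -> side_act i g (side_act i g' s) = side_act i (g ++ g') s.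
Proof.
move=> red; have [off _] := split_head_reduced i red; rewrite /side_act.
have [-> E] := split_head_nf_cons (g' ++ (split_head i s).1) off.
by rewrite -catA; apply/nf_cons_eq/ae_catl.
Qed.

Lemma side_act_nil i s : reduced s.2 -> side_act i [::] s = s.
Proof. exact: nf_cons_split_head. Qed.

Lemma side_act_eq i g g' s : AEi i g g' -> side_act i g s = side_act i g' s.
Proof. by move=> H; apply/nf_cons_eq/ae_catr. Qed.

Lemma side_act_v i b s : reduced s.2 -> side_act i [:: (v, b)] s = ((s.1 + letter_sign b)%Z, s.2).
Proof.
case: s => n ts /= red.
have shift t ts' : t = [::] \/ vrep i t = t /\ t <> [::] ->
    nf_cons i ((v, b) :: vp n ++ t) ts' = ((n + letter_sign b)%Z, if t == [::] then ts' else (i, t) :: ts').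
  move=> ht; rewrite -(nf_cons_vpow _ _ ht); apply: nf_cons_eq.
  by rewrite -cat1s catA; apply/ae_catr/ae_vpowS.
rewrite /side_act; case: ts red => [|[j t] ts] /= => [_|[rep_t t0 _ _ _]].
  by rewrite -[vp n]cats0 shift; auto.
case: eqP => [Eji|_] /=.
  by subst j; rewrite shift; [case: eqP => // /t0 | right].
by rewrite -[vp n]cats0 shift; auto.
Qed.

Definition letter_act (x : T) (b : bool) (s : nf_state) : nf_state :=
  if x \in S1 then side_act false [:: (x, b)] s
  else if x \in S2 then side_act true [:: (x, b)] s else s.

Lemma letter_act_side i x b s : x \in side i -> reduced s.2 -> letter_act x b s = side_act i [:: (x, b)] s.
Proof.
rewrite /letter_act; case: i => /= xi red; last by rewrite xi.
case: ifP => x1; last by rewrite xi.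
by rewrite (split_meet spl x1 xi) !side_act_v.
Qed.

Lemma reduced_letter_act x b s : reduced s.2 -> reduced (letter_act x b s).2.
Proof.
move=> red; rewrite /letter_act; case: ifP => x1.
  by apply: (reduced_side_act (i := false)); rewrite //= x1.
by case: ifP => x2 //; apply: (reduced_side_act (i := true)); rewrite //= x2.
Qed.

Lemma letter_actK x b s : reduced s.2 -> letter_act x b (letter_act x (~~ b) s) = s.
Proof.
move=> red; have cancel i : side_act i [:: (x, b)] (side_act i [:: (x, ~~ b)] s) = s.
  rewrite side_act_cat // -[RHS](side_act_nil i red); apply: side_act_eq.
  exact: (ae_cancel _ m [::] [::] x b).
by rewrite /letter_act; case: (x \in S1); last case: (x \in S2).
Qed.

Definition nf_run (w : word T) (s : nf_state) : nf_state := act_word letter_act w s.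

Lemma reduced_nf_run w s : reduced s.2 -> reduced (nf_run w s).2.
Proof. by elim: w => [|[x b] w IH] //= red; apply/reduced_letter_act/IH. Qed.

Lemma nf_run_side i w s : word_in (side i) w -> reduced s.2 -> nf_run w s = side_act i w s.
Proof.
elim: w => [|[x b] w IH] /=; first by move=> _ red; rewrite side_act_nil.
case/andP => xi wi red; rewrite /nf_run /= -/(nf_run w s) IH //.
by rewrite (letter_act_side _ xi) ?side_act_cat //; apply: reduced_side_act.
Qed.

Lemma nf_run_eq w1 w2 s : AE w1 w2 -> reduced s.2 -> nf_run w1 s = nf_run w2 s.
Proof.
move=> H red; apply: (act_word_artin (P := fun s => reduced s.2)) H s red.
- by move=> *; apply: reduced_letter_act.
- by move=> *; apply: letter_actK.
move=> a b p eab redp; have [i /andP [ai bi]] := induced_edge_side eab.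
rewrite -!/(nf_run _ p) !(nf_run_side (i := i)) ?word_in_alt //; apply: side_act_eq.
have := @ae_rel T (induced e (side i)) m [::] [::] a b; rewrite /= !cats0; apply.
by case/and3P: eab => eab' _ _; rewrite /induced /= eab' ai bi.
Qed.

Lemma nf_eval_split_head i s : nf_eval s = (split_head i s).1 ++ nf_word (split_head i s).2.
Proof. by case: s => n [|[j t] ts] //=; case: eqP => _ //=; rewrite /nf_eval /= -catA. Qed.

Lemma nf_eval_side_act i g s : AE (nf_eval (side_act i g s)) (g ++ nf_eval s).
Proof.
rewrite (nf_eval_split_head i s).
have -> : forall h ts, nf_eval (nf_cons i h ts) = (vp (vexp i h) ++ vrep i h) ++ nf_word ts.
  by move=> h ts; rewrite /nf_eval /nf_cons /=; case: eqP => [->|_] //=; rewrite ?cats0 -?catA.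
by rewrite catA; apply/ae_catr/ae_side/ae_sym/vexpP.
Qed.

Definition nf0 : nf_state := (0%Z, [::]).

Lemma nf_eval_run w : word_in S w -> AE (nf_eval (nf_run w nf0)) w.
Proof.
suff run s : word_in S w -> reduced s.2 -> AE (nf_eval (nf_run w s)) (w ++ nf_eval s).
  by move=> wS; have := run nf0 wS I; rewrite /nf_eval /= cats0.
elim: w => [|[x b] w IH] /=; first by move=> *; apply: ae_refl.
case/andP => xS wS red; rewrite /nf_run /= -/(nf_run w s).
have [i xi] : exists i, x \in side i.
  by case/orP: (split_cover spl xS) => h; [exists false | exists true].
rewrite (letter_act_side _ xi); last exact: reduced_nf_run.
by apply: ae_trans (nf_eval_side_act _ _ _) _; apply: (ae_catl [:: (x, b)] (IH wS red)).
Qed.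

Lemma size_nf_run_side i w : word_in (side i) w -> size (nf_run w nf0).2 <= 1.
Proof. by move=> wi; rewrite (nf_run_side wi) //= /side_act /nf_cons /=; case: eqP. Qed.

Lemma nf_run_nf_word ts : reduced ts -> nf_run (nf_word ts) nf0 = (0%Z, ts).
Proof.
elim: ts => [|[j t] ts IH] //= [rep_t t0 wt off red].
rewrite /nf_run act_word_cat -/(nf_run _ nf0) -/(nf_run _ _) IH //.
rewrite (nf_run_side wt) // /side_act split_head_off //=.
have -> : t ++ vp 0 = vp 0 ++ t by rewrite cats0.
by rewrite nf_cons_vpow; [case: eqP | right].
Qed.

Lemma in_vcoset_nil_catr i g n : in_vcoset i [::] (g ++ vp n) -> in_vcoset i [::] g.
Proof.
rewrite /in_vcoset; setoid_rewrite cats0; case=> n' H; exists (n' + - n)%Z.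
apply: ae_trans (_ : AEi i g (g ++ vp n ++ vp (- n))) _.
  by rewrite -{1}[g]cats0; apply/ae_catl/ae_sym/ae_vpow_opp.
by rewrite catA; apply: ae_trans (ae_catr _ H) _; apply: ae_vpowD.
Qed.

Lemma in_vcoset_nil_winv i t : in_vcoset i [::] (winv t) -> in_vcoset i [::] t.
Proof.
rewrite /in_vcoset; setoid_rewrite cats0; case=> n /ae_winv; rewrite winvK => H.
exists (- n)%Z; apply: ae_trans H _; rewrite -[X in artin_eq _ _ _ X]cat0s.
apply: ae_trans (_ : AEi i _ (winv (vp n) ++ vp n ++ vp (- n))) _.
  by rewrite -{1}[winv _]cats0; apply/ae_catl/ae_sym/ae_vpow_opp.
by rewrite catA; apply/ae_catr/ae_invl.
Qed.

Lemma side_act_grow i g s : reduced s.2 -> head_off i s.2 -> ~ in_vcoset i [::] g ->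
  exists t, (side_act i g s).2 = (i, t) :: s.2.
Proof.
case: s => n ts red off g_v; rewrite /side_act split_head_off // /nf_cons /=.
case: eqP => [E|_]; last by eexists.
by case: g_v; apply: (@in_vcoset_nil_catr i g n); rewrite -E; apply: in_vcoset_vrep.
Qed.

Lemma size_nf_run_winv ts s : reduced ts -> reduced s.2 ->
  (if ts is (j, _) :: _ then head_off j s.2 else true) ->
  size (nf_run (winv (nf_word ts)) s).2 = size ts + size s.2.
Proof.
elim: ts s => [|[j t] ts IH] s //= [rep_t t0 wt off red] reds offs.
rewrite winv_cat /nf_run act_word_cat -!/(nf_run _ _).
have wt' : word_in (side j) (winv t) by rewrite word_in_winv.
rewrite (nf_run_side wt' reds).
have nc : ~ in_vcoset j [::] (winv t) by move/in_vcoset_nil_winv/vrep_nil; rewrite rep_t.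
have [t' E] := side_act_grow reds offs nc.
have reds' : reduced (side_act j (winv t) s).2 := reduced_side_act reds wt'.
have offs' : (if ts is (j', _) :: _ then head_off j' (side_act j (winv t) s).2 else true) : bool.
  by case: ts off {IH red} => [|[j' t''] ts] // off; rewrite E /= eq_sym.
by rewrite (IH _ red reds' offs') E /= addnS.
Qed.

Lemma size_nf_run_conj ts y : reduced ts -> head_off false ts ->
  word_in S1 y -> ~ in_vcoset false [::] y ->
  size (nf_run (winv (nf_word ts) ++ y ++ nf_word ts) nf0).2 = (size ts).*2.+1.
Proof.
move=> red off wy y_v; rewrite /nf_run !act_word_cat -!/(nf_run _ _) nf_run_nf_word //.
rewrite (nf_run_side (i := false) (w := y)) //.
have [t E] := side_act_grow (s := (0%Z, ts)) red off y_v.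
have red' := reduced_side_act (i := false) (s := (0%Z, ts)) red wy.
have off' : (if ts is (j, _) :: _ then head_off j (side_act false y (0%Z, ts)).2 else true) : bool.
  by case: ts off E {red red'} => [|[j t'] ts] // off E; rewrite E /= eq_sym.
by rewrite size_nf_run_winv // E /= addnS addnn.
Qed.

(* The normal form of k is a t1 ... tr with a in A_S1 and t1 from S2. If r > 0,
   conjugating an element y of A_S1 \ <v> by k gives a reduced word of length
   2r + 1 > 1, which is in neither A_S1 nor A_S2. *)
Lemma conj_side_in_side1 k (X : word T -> Prop) :
  word_in S k ->
  (forall x, X x -> word_in S1 x) ->
  (forall a, word_in S1 a -> exists2 x, X x & ~ in_vcoset false [::] (winv a ++ x ++ a)) ->
  (forall x, X x -> exists2 w, word_in S1 w || word_in S2 w & AE (winv k ++ x ++ k) w) ->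
  exists2 k1, word_in S1 k1 & AE k k1.
Proof.
move=> wk wX X_out X_conj.
set s := nf_run k nf0; have red : reduced s.2 := reduced_nf_run k (I : reduced nf0.2).
have [off red'] := split_head_reduced false red.
move: (nf_eval_run wk); rewrite -/s (nf_eval_split_head false s).
set a := (split_head false s).1; set ts := (split_head false s).2 => Ek.
have wa : word_in S1 a := word_in_split_head false red.
have [ts0 | ts_ne] := eqVneq ts [::].
  by exists a => //; apply: ae_sym; move: Ek; rewrite ts0 cats0.
have [x Xx y_v] := X_out a wa.
have [w ww Hw] := X_conj x Xx.
have conj_k : AE (winv k ++ x ++ k) (winv (nf_word ts) ++ (winv a ++ x ++ a) ++ nf_word ts).
  apply: ae_trans (_ : AE _ (winv (a ++ nf_word ts) ++ x ++ a ++ nf_word ts)) _.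
    by apply: ae_cat; [apply/ae_winv/ae_sym | apply/ae_catl/ae_sym].
  by rewrite winv_cat -!catA; apply: ae_refl.
have wy : word_in S1 (winv a ++ x ++ a) by rewrite !word_in_cat word_in_winv wa wX.
have := size_nf_run_conj red' off wy y_v.
rewrite (nf_run_eq (ae_trans (ae_sym conj_k) Hw)) // => E.
have : size (nf_run w nf0).2 <= 1.
  by case/orP: ww; [apply: (size_nf_run_side (i := false)) | apply: (size_nf_run_side (i := true))].
by rewrite E ltnS leqn0 double_eq0 size_eq0 (negbTE ts_ne).
Qed.

Hypotheses (e_irr : irreflexive e) (m_sym : forall a b, m a b = m b a).
Hypothesis m_ge2 : forall a b, e a b -> 2 <= m a b.

(* Exponent sums force both conjugates to be v itself, so x = y in A_S1, and the
   Tits representation separates distinct generators. *)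
Lemma conj_gen_in_vpow_inj a x y :
  in_vcoset false [::] (winv a ++ [:: (x, false)] ++ a) ->
  in_vcoset false [::] (winv a ++ [:: (y, false)] ++ a) -> x = y.
Proof.
have conj_v z : in_vcoset false [::] (winv a ++ [:: (z, false)] ++ a) ->
    AEi false (winv a ++ [:: (z, false)] ++ a) (vp 1).
  case=> n; rewrite cats0 => H; suff En : n = 1%Z by rewrite -En.
  move/ae_exp_sum: H; rewrite !exp_sum_cat exp_sum_winv exp_sum_vpow exp_sum_cons exp_sum_nil.
  by cbv [letter_sign]; lia.
move=> /conj_v Hx /conj_v Hy.
apply: (artin_gen_inj e_sym e_irr m_sym m_ge2 (e' := induced e S1)); first by move=> p q /and3P [].
apply: ae_trans (ae_sym (ae_conjK m _ a [:: (x, false)])) _.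
apply: ae_trans (ae_conjK m _ a [:: (y, false)]).
by apply/ae_catl/ae_catr/(ae_trans Hx)/ae_sym.
Qed.

End Amalgam.

Section Rigidity.
Variables (T : finType) (e : rel T) (m : T -> T -> nat).
Hypotheses (e_sym : symmetric e) (e_irr : irreflexive e).
Hypotheses (m_sym : forall a b, m a b = m b a) (m_ge2 : forall a b, e a b -> 2 <= m a b).

Notation AE S := (artin_eq (induced e S) m).

Definition retract (S1 : {set T}) (v z : T) : T := if z \in S1 then z else v.

Section Retract.
Variables (S S1 S2 : {set T}) (v : T).
Hypothesis spl : split_at e S S1 S2 v.

Lemma ae_retract w1 w2 : AE S w1 w2 -> AE S1 (wmap (retract S1 v) w1) (wmap (retract S1 v) w2).
Proof.
apply: ae_wmap => a b /and3P [eab aS bS]; rewrite /retract.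
have [v1 v2] := (split_v1 spl, split_v2 spl).
case: ifP => a1; case: ifP => b1.
- by have := @ae_rel T (induced e S1) m [::] [::] a b; rewrite /= !cats0; apply; rewrite /induced /= eab a1 b1.
- have b2 : b \in S2 by move: (split_cover spl bS); rewrite b1.
  by case: (split_edge spl eab a1 b2) => E; [subst a; apply: ae_refl | subst b; rewrite v1 in b1].
- have a2 : a \in S2 by move: (split_cover spl aS); rewrite a1.
  rewrite e_sym in eab.
  by case: (split_edge spl eab b1 a2) => E; [subst b; apply: ae_refl | subst a; rewrite v1 in a1].
- exact: ae_refl.
Qed.

Lemma retract_id w : word_in S1 w -> wmap (retract S1 v) w = w.
Proof. by apply: wmap_id_in => z z1; rewrite /retract z1. Qed.

End Retract.

Lemma ae_conj_vword (e' : rel T) v (c : word T) : word_in [set v] c ->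
  artin_eq e' m (winv c ++ [:: (v, false)] ++ c) [:: (v, false)].
Proof.
elim: c => [|[x b] c IH] /=; first by move=> _; apply: ae_refl.
case/andP; rewrite inE => /eqP -> wc; rewrite winv_cons -catA.
apply: ae_trans (IH wc); apply: ae_catl => /=.
by case: b; [apply: (ae_cancel _ m [:: (v, false)] c v false) | apply: (ae_cancel _ m [::] _ v true)].
Qed.

(* Retracting onto S2 sends S1 to v and fixes A_S2. *)
Lemma conj_side1_in_side2 S S1 S2 v k1 x w : split_at e S S1 S2 v ->
  word_in S1 k1 -> x \in S1 -> word_in S2 w ->
  AE S (winv k1 ++ [:: (x, false)] ++ k1) w -> AE S (winv k1 ++ [:: (x, false)] ++ k1) [:: (v, false)].
Proof.
move=> spl wk1 x1 w2 H.
have to_v z : z \in S1 -> retract S2 v z = v.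
  by rewrite /retract; case: ifP => // z2 z1; exact: (split_meet spl z1 z2).
have := ae_retract (split_at_sym e_sym spl) H.
rewrite (retract_id v w2) !wmap_cat wmap_winv /= to_v // => /(ae_mono (induced_sub (split_sub2 spl))) Hr.
apply: ae_trans H (ae_trans (ae_sym Hr) _); apply: ae_conj_vword.
by move: wk1; rewrite /word_in all_map; apply: sub_all => -[z b] /= z1; rewrite inE to_v.
Qed.

Definition conj_sub (S SH SV : {set T}) (k : word T) : Prop :=
  forall h, word_in SH h -> exists2 w, word_in SV w & AE S (winv k ++ h ++ k) w.

Definition conj_rigid (S : {set T}) : Prop :=
  forall SH SV : {set T}, big_chunk_in e S SH -> big_chunk_in e S SV ->
  forall k, word_in S k -> conj_sub S SH SV k ->
  SH = SV /\ exists2 k1, word_in SH k1 & AE S k k1.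

Lemma conj_sub_ae S SH SV k k' : AE S k k' -> conj_sub S SH SV k -> conj_sub S SH SV k'.
Proof.
move=> kk' conj h /conj [w wV Hw]; exists w => //; apply: ae_trans Hw.
by apply: ae_cat; [apply/ae_winv/ae_sym | apply/ae_catl/ae_sym].
Qed.

Section SplitConjugation.
Variables (S S1 S2 : {set T}) (v : T) (SH SV : {set T}) (x y : T).
Hypotheses (spl : split_at e S S1 S2 v) (SH1 : SH \subset S1).
Hypotheses (xH : x \in SH) (yH : y \in SH) (exy : e x y).

Lemma conj_sub_side1 k : (SV \subset S1) \/ (SV \subset S2) -> word_in S k ->
  conj_sub S SH SV k -> exists2 k1, word_in S1 k1 & AE S k k1.
Proof.
move=> SV_side wk conj; apply: (conj_side_in_side1 e_sym spl (X := word_in SH)) => //.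
- by move=> h; apply: word_in_sub.
- move=> a _; apply: NNPP => nex.
  have gen_in_vpow z : z \in SH -> in_vcoset e m S1 S2 v false [::] (winv a ++ [:: (z, false)] ++ a).
    by move=> zH; apply: NNPP => nz; apply: nex; exists [:: (z, false)]; rewrite /= ?zH.
  move: exy; rewrite (conj_gen_in_vpow_inj e_sym e_irr m_sym m_ge2 (gen_in_vpow x xH) (gen_in_vpow y yH)).
  by rewrite e_irr.
- move=> h /conj [w wV Hw]; exists w => //.
  by case: SV_side => sub; rewrite (word_in_sub sub wV) ?orbT.
Qed.

Lemma conj_sub_not_side2 k1 : SV \subset S2 -> word_in S1 k1 -> ~ conj_sub S SH SV k1.
Proof.
move=> SV2 wk1 conj.
have to_v z : z \in SH -> AE S (winv k1 ++ [:: (z, false)] ++ k1) [:: (v, false)].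
  move=> zH; have [|w wV Hw] := conj [:: (z, false)]; first by rewrite /= zH.
  exact: conj_side1_in_side2 spl wk1 (subsetP SH1 z zH) (word_in_sub SV2 wV) Hw.
suff E : x = y by move: exy; rewrite E e_irr.
apply: (artin_gen_inj e_sym e_irr m_sym m_ge2 (e' := induced e S)); first by move=> p q /and3P [].
apply: ae_trans (ae_sym (ae_conjK m _ k1 [:: (x, false)])) _.
apply: ae_trans (ae_conjK m _ k1 [:: (y, false)]).
by apply/ae_catl/ae_catr/(ae_trans (to_v x xH))/ae_sym/to_v.
Qed.

Lemma conj_sub_retract k1 : SV \subset S1 -> word_in S1 k1 ->
  conj_sub S SH SV k1 -> conj_sub S1 SH SV k1.
Proof.
move=> SV1 wk1 conj h hH; have [w wV Hw] := conj h hH; exists w => //.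
have := ae_retract spl Hw; rewrite (retract_id v (word_in_sub SV1 wV)) retract_id //.
by rewrite !word_in_cat word_in_winv wk1 (word_in_sub SH1 hH).
Qed.

End SplitConjugation.

Lemma conj_rigid_split (S S1 S2 : {set T}) v : split_at e S S1 S2 v -> conj_rigid S1 ->
  connected_in e S -> 1 < #|S| ->
  forall SH SV : {set T}, SH \subset S1 -> big_chunk_in e S SH -> big_chunk_in e S SV ->
  forall k, word_in S k -> conj_sub S SH SV k ->
  SH = SV /\ exists2 k1, word_in SH k1 & AE S k k1.
Proof.
move=> spl IH1 cS cardS SH SV SH1 bH bV k wk conj.
have [x [y [xH yH exy]]] := big_chunk_in_edge e_sym cS cardS bH.
have [SV_S cV _] := bV; have SV_side := chunk_split_side e_sym spl cV SV_S.
have [k1 wk1 kk1] := conj_sub_side1 spl SH1 xH yH exy SV_side wk conj.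
have {}conj := conj_sub_ae kk1 conj.
have SV1 : SV \subset S1.
  by case: SV_side => // SV2; case: (conj_sub_not_side2 spl SH1 xH yH exy SV2 wk1 conj).
have S1S := split_sub1 spl.
have [-> [k2 wk2 k1k2]] := IH1 SH SV (big_chunk_in_sub SH1 S1S bH) (big_chunk_in_sub SV1 S1S bV)
  k1 wk1 (conj_sub_retract spl SH1 SV1 wk1 conj).
by split => //; exists k2 => //; apply: ae_trans kk1 (ae_mono (induced_sub S1S) k1k2).
Qed.

Lemma conj_rigid_connected S : connected_in e S -> conj_rigid S.
Proof.
have [n leSn] := ubnP #|S|; elim: n S leSn => // n IHn S /ltnSE cardS cS.
have [chS | [v vS ncS]] : (forall u, u \in S -> connected_in e (S :\ u)) \/
    exists2 v, v \in S & ~ connected_in e (S :\ v).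
- case: (classic (exists2 v, v \in S & ~ connected_in e (S :\ v))) => [|nex]; [by right | left].
  by move=> u uS; apply: NNPP => nc; apply: nex; exists u.
- move=> SH SV [SH_S [SH0 _ _] maxH] [SV_S _ maxV] k wk _.
  have S0 : S != set0 by apply: contraNneq SH0 => S0; rewrite -subset0 -S0.
  have chunkS : chunk e S by [].
  have [<- <-] := (maxH S chunkS SH_S (subxx S), maxV S chunkS SV_S (subxx S)).
  by split => //; exists k => //; apply: ae_refl.
have [S1 [S2 [spl pS1 pS2]]] := cut_vertex_split vS ncS.
have spl' := split_at_sym e_sym spl.
have IH1 : conj_rigid S1.
  exact: IHn (leq_trans (proper_card pS1) cardS) (connected_split1 e_sym spl cS).
have IH2 : conj_rigid S2.
  exact: IHn (leq_trans (proper_card pS2) cardS) (connected_split1 e_sym spl' cS).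
have card2 : 1 < #|S|.
  move: pS1; rewrite properE => /andP [_ /subsetPn [z zS zS1]]; apply/card_gt1P; exists z, v.
  by split => //; apply: contraNneq zS1 => ->; apply: split_v1 spl.
move=> SH SV bH bV; have [SH_S cH _] := bH.
case: (chunk_split_side e_sym spl cH SH_S) => SH_side.
  exact: conj_rigid_split spl IH1 cS card2 _ _ SH_side bH bV.
exact: conj_rigid_split spl' IH2 cS card2 _ _ SH_side bH bV.
Qed.

End Rigidity.

Theorem lemma5p3 (T : finType) (e : rel T) (m : T -> T -> nat)
  (e_sym : symmetric e) (e_irr : irreflexive e)
  (m_sym : forall a b, m a b = m b a)
  (m_ge2 : forall a b, e a b -> 2 <= m a b)
  (Gamma_conn : forall a b, connect e a b)
  (Gamma_card : 2 < #|T|)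
  (SH SV : {set T}) (bigH : big_chunk e SH) (bigV : big_chunk e SV)
  (k : word T)
  (H_le_conj : forall h, in_parabolic e m SH h ->
      in_parabolic e m SV (winv k ++ h ++ k)) :
  (forall g, in_parabolic e m SH g <-> in_parabolic e m SV g) /\
  in_parabolic e m SH k.
Proof.
have e_induced : subrel e (induced e setT) by move=> x y exy; rewrite /induced /= !inE exy.
have cT : connected_in e setT.
  by move=> a b _ _; apply: connect_sub (Gamma_conn a b) => x y /e_induced /connect1.
have wk : word_in setT k by apply/allP => l _; rewrite inE.
have conjHV : conj_sub e m setT SH SV k.
  move=> h hH; have [w [wV Hw]] := H_le_conj h (ex_intro _ h (conj hH (ae_refl e m h))).
  by exists w => //; apply: ae_mono Hw.
have [-> [k1 wk1 kk1]] := conj_rigid_connected e_sym e_irr m_sym m_ge2 cT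
  (big_chunk_inT bigH) (big_chunk_inT bigV) wk conjHV.
by split => //; exists k1; split => //; apply: ae_mono kk1 => x y /and3P [].
Qed.
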